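(* Let $K$ be a field of any characteristic. Let $d_1,\ldots,d_n$ be positive integers and let $a_{i,j}$ ($1\le i\le r$, $1\le j\le n$) be positive integers, where $r\ge 3$. Let $A$ be the set of columns of the $n\times(n+r)$ matrix $$\begin{pmatrix} d_1 & 0 & \cdots & 0 & a_{1,1} & \cdots & a_{r,1}\\ 0 & d_2 & \cdots & 0 & a_{1,2} & \cdots & a_{r,2}\\ \vdots & & \ddots & & \vdots & & \vdots\\ 0 & 0 & \cdots & d_n & a_{1,n} & \cdots & a_{r,n}\end{pmatrix},$$ and let $I_A\subset K[x_1,\ldots,x_{n+r}]$ be the corresponding toric ideal (of height $r$). Then $I_A$ is radical splittable.
   Context: For a configuration $A=\{{\bf a}_1,\ldots,{\bf a}_N\}\subset\mathbb{Z}^n$ with $\ker_{\mathbb{Z}}(A)\cap\mathbb{N}^N=\{{\bf 0}\}$, the toric ideal $I_A$ is the kernel of $K[x_1,\ldots,x_N]\to K[t_1^{\pm1},\ldots,t_n^{\pm1}]$, $x_i\mapsto{\bf t}^{{\bf a}_i}$. (In the paper's terminology, $V(I_A)$ is a simplicial toric variety with full parametrization: all $a_{i,j}$ are nonnegative and nonzero.) $I_A$ is radical splittable if there exist toric ideals $I_{A_1},I_{A_2}\subset K[x_1,\ldots,x_{n+r}]$ with $I_A=\mathrm{rad}(I_{A_1}+I_{A_2})$ and $I_{A_i}\ne I_A$ for $i=1,2$. *)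

From HB Require Import structures.
From mathcomp Require Import all_boot all_algebra.
From mathcomp Require Import mpoly.

Set Implicit Arguments.
Unset Strict Implicit.
Unset Printing Implicit Defensive.

Import GRing.Theory.
Local Open Scope ring_scope.

(* A configuration A = {a_1,...,a_N} in Z^n is an n x N integer matrix whose
   columns are the a_i. *)

Definition mcol (N : nat) (m : 'X_{1..N}) : 'cV[int]_N := \col_i ((m i)%:Z).

(* the exponent of t in the image of x^m under x_i |-> t^{a_i} : t^{A m} *)
Definition tdeg (n N : nat) (A : 'M[int]_(n, N)) (m : 'X_{1..N}) : 'cV[int]_n :=
  A *m mcol m.

Definition config_ok (n N : nat) (A : 'M[int]_(n, N)) : Prop :=
  forall m : 'X_{1..N}, tdeg A m = 0 -> m = 0%MM.

(* coefficient of the Laurent monomial t^b in the image of p under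
   K[x_1..x_N] -> K[t^{±1}], x_i |-> t^{a_i} *)
Definition toric_img_coef (K : fieldType) (n N : nat) (A : 'M[int]_(n, N))
  (p : {mpoly K[N]}) (b : 'cV[int]_n) : K :=
  \sum_(m <- msupp p | tdeg A m == b) p@_m.

Definition in_toric (K : fieldType) (n N : nat) (A : 'M[int]_(n, N))
  (p : {mpoly K[N]}) : Prop :=
  forall b : 'cV[int]_n, toric_img_coef A p b = 0.

(* I_A is radical splittable: there are toric ideals I_{A1}, I_{A2} of
   K[x_1..x_N] with I_A = rad(I_{A1} + I_{A2}) and I_{Ai} <> I_A. *)
Definition radical_splittable (K : fieldType) (n N : nat) (A : 'M[int]_(n, N)) : Prop :=
  exists (n1 n2 : nat) (A1 : 'M[int]_(n1, N)) (A2 : 'M[int]_(n2, N)),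
    [/\ config_ok A1, config_ok A2,
        (forall p : {mpoly K[N]},
            in_toric A p <->
            exists (k : nat) (g h : {mpoly K[N]}),
              [/\ in_toric A1 g, in_toric A2 h & p ^+ k = g + h]),
        (exists p : {mpoly K[N]}, ~ (in_toric A1 p <-> in_toric A p))
      & (exists p : {mpoly K[N]}, ~ (in_toric A2 p <-> in_toric A p))].

Definition simplicial_config (n r : nat) (d : 'I_n -> nat) (a : 'I_r -> 'I_n -> nat)
  : 'M[int]_(n, n + r) :=
  row_mx (\matrix_(i < n, j < n) (if i == j then (d i)%:Z else 0))
         (\matrix_(j < n, k < r) (a k j)%:Z).

From mathcomp Require Import all_boot all_order all_algebra.
From mathcomp Require Import mpoly.
From mathcomp Require Import zify ring.
From Stdlib Require Import Classical.

Set Implicit Arguments.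
Unset Strict Implicit.
Unset Printing Implicit Defensive.
Import Order.TTheory GRing.Theory Num.Theory.
Local Open Scope ring_scope.

(* Write L = ker A, D = d_1 ... d_n and P = x_1 ... x_n. Each binomial
   y_k^D - x^(c_k), with (c_k)_i = D a_(k,i) / d_i > 0, lies in I_A. Fix
   three distinct indices k0, k1, k2 and u in L whose y_k0-coordinate generates
   the y_k0-coordinates of L, with u_(y_k1) <> 0. Adding rows to A gives A1 with
   ker A1 = {w in L : w_y proportional to u_y away from k0}, which contains u
   and the exponent vector of the k0-th binomial, and A2 with
   ker A2 = {w in L : w_(y_k0) = 0}, which contains those of the others; thus
   L = ker A1 + ker A2. Put J = I_A1 + I_A2 and let p be in I_A.
   - P^t p lies in J: I_A is spanned by binomials x^v - x^v', and after
     multiplying by a large x-monomial, v - v' = w1 + w2 with w_i in ker A_i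
     becomes a chain of binomials of I_A1 and I_A2 with nonnegative exponents.
   - p^k lies in J + (P): a monomial of p containing some y_k has its D-th power
     in J + (x^(c_k)); one containing no y_k and missing some x_i is alone in
     its fibre, hence does not occur in p; the others are multiples of P.
   Hence p^(kt+1) is in J and I_A = rad J, while the k2-th binomial is not in
   I_A1 (as u_(y_k1) <> 0) and the k0-th one is not in I_A2. *)

Section IdealPredicates.
Variable R : comPzRingType.
Implicit Types (I J : R -> Prop) (x y P : R).

Definition ideal_pred I :=
  [/\ I 0, forall x y, I x -> I y -> I (x + y) & forall x y, I y -> I (x * y)].

Definition ideal_add I J x := exists i j, [/\ I i, J j & x = i + j].
Definition principal_ideal P x := exists g, x = P * g.
Definition saturation I P x := exists t, I (P ^+ t * x).
Definition radical I x := exists k, I (x ^+ k).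

Section Ideal.
Variable I : R -> Prop.
Hypothesis idI : ideal_pred I.

Lemma ideal_pred0 : I 0. Proof. by case: idI. Qed.
Lemma ideal_predD x y : I x -> I y -> I (x + y). Proof. by case: idI => _ + _; apply. Qed.
Lemma ideal_predMl x y : I y -> I (x * y). Proof. by case: idI => _ _; apply. Qed.
Lemma ideal_predMr x y : I x -> I (x * y).
Proof. by rewrite mulrC; apply: ideal_predMl. Qed.
Lemma ideal_predN x : I x -> I (- x). Proof. by rewrite -mulN1r; apply: ideal_predMl. Qed.

Lemma ideal_pred_sum (T : eqType) (s : seq T) (F : T -> R) :
  (forall t, t \in s -> I (F t)) -> I (\sum_(t <- s) F t).
Proof.
elim: s => [|t s IHs] Fs; first by rewrite big_nil; apply: ideal_pred0.
rewrite big_cons; apply: ideal_predD; first by apply: Fs; rewrite mem_head.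
by apply: IHs => t' t's; apply: Fs; rewrite inE t's orbT.
Qed.

Lemma ideal_pred_subrXX x y k : I (x - y) -> I (x ^+ k - y ^+ k).
Proof. by rewrite subrXX; apply: ideal_predMr. Qed.

Lemma ideal_pred_saturation P : ideal_pred (saturation I P).
Proof.
split.
- by exists 0%N; rewrite mulr0; apply: ideal_pred0.
- move=> x y [s Ix] [t Iy]; exists (s + t)%N.
  have -> : P ^+ (s + t) * (x + y) = P ^+ t * (P ^+ s * x) + P ^+ s * (P ^+ t * y).
    by rewrite exprD; ring.
  by apply: ideal_predD; apply: ideal_predMl.
- by move=> x y [t Iy]; exists t; rewrite mulrCA; apply: ideal_predMl.
Qed.

Lemma saturation_cancel P x y T q :
  x * y = P ^+ T -> saturation I P (x * q) -> saturation I P q.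
Proof.
move=> xyP [t Ixq]; exists (t + T)%N.
rewrite exprD -xyP.
suff -> : P ^+ t * (x * y) * q = y * (P ^+ t * (x * q)) by apply: ideal_predMl.
by ring.
Qed.

Lemma radicalD x y : radical I x -> radical I y -> radical I (x + y).
Proof.
move=> [k Ixk] [l Iyl]; exists (k + l)%N; rewrite exprDn.
apply: ideal_pred_sum => i _; rewrite -mulr_natl; apply: ideal_predMl.
case: (leqP l i) => [li | il].
  have -> : y ^+ i = y ^+ (i - l) * y ^+ l by rewrite -exprD subnK.
  by rewrite mulrA; apply: ideal_predMl.
rewrite (_ : (k + l - i)%N = k + (l - i))%N; last by lia.
by rewrite exprD -mulrA; apply: ideal_predMr.
Qed.

Lemma radical_sum (T : eqType) (s : seq T) (F : T -> R) :
  (forall t, t \in s -> radical I (F t)) -> radical I (\sum_(t <- s) F t).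
Proof.
elim: s => [|t s IHs] Fs; first by exists 1%N; rewrite big_nil expr1; apply: ideal_pred0.
rewrite big_cons; apply: radicalD; first by apply: Fs; rewrite mem_head.
by apply: IHs => t' t's; apply: Fs; rewrite inE t's orbT.
Qed.

Lemma radicalMl x y : radical I y -> radical I (x * y).
Proof. by move=> [k Iyk]; exists k; rewrite exprMn; apply: ideal_predMl. Qed.

(* [x^(kt+1) = x (x^(kt) - (P g)^t) + g^t (P^t x)], where [x^k - P g] is in [I]. *)
Lemma radical_of_saturation P x :
  saturation I P x -> radical (ideal_add I (principal_ideal P)) x -> radical I x.
Proof.
move=> [t IPx] [k [i [_ [Ii [g ->] xk]]]].
have Ixt : I (x ^+ (k * t) - (P * g) ^+ t).
  by rewrite exprM; apply: ideal_pred_subrXX; rewrite xk addrK.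
exists (k * t).+1; rewrite exprS.
have -> : x * x ^+ (k * t) = x * (x ^+ (k * t) - (P * g) ^+ t) + g ^+ t * (P ^+ t * x).
  by rewrite exprMn; ring.
by apply: ideal_predD; apply: ideal_predMl.
Qed.

End Ideal.

Lemma ideal_pred_add I J : ideal_pred I -> ideal_pred J -> ideal_pred (ideal_add I J).
Proof.
move=> idI idJ; split.
- exists 0, 0; split; last by rewrite addr0.
  + exact: (ideal_pred0 idI).
  + exact: (ideal_pred0 idJ).
- move=> _ _ [i1 [j1 [Ii1 Jj1 ->]]] [i2 [j2 [Ii2 Jj2 ->]]].
  exists (i1 + i2), (j1 + j2); split; last by rewrite addrACA.
  + exact: (ideal_predD idI).
  + exact: (ideal_predD idJ).
- move=> x _ [i [j [Ii Jj ->]]].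
  exists (x * i), (x * j); split; last by rewrite mulrDr.
  + exact: (ideal_predMl idI).
  + exact: (ideal_predMl idJ).
Qed.

Lemma ideal_pred_principal P : ideal_pred (principal_ideal P).
Proof.
split; first by exists 0; rewrite mulr0.
- by move=> _ _ [g ->] [h ->]; exists (g + h); rewrite mulrDr.
- by move=> x _ [g ->]; exists (x * g); rewrite mulrCA.
Qed.

End IdealPredicates.

Lemma big_fibers (I J : eqType) (V : nmodType) (s : seq I) (f : I -> J) (F : I -> V) :
  \sum_(i <- s) F i = \sum_(j <- undup (map f s)) \sum_(i <- s | f i == j) F i.
Proof.
rewrite (exchange_big_dep xpredT) //=; apply: eq_big_seq => i si.
rewrite -big_filter (eq_filter (a2 := pred1 (f i))) => [|j]; last by rewrite /= eq_sym.
by rewrite filter_pred1_uniq ?undup_uniq ?big_seq1 // mem_undup map_f.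
Qed.

Definition col_mnm (N : nat) (z : 'cV[int]_N) : 'X_{1..N} :=
  [multinom `|z j ord0|%N | j < N].

Lemma mcolK N (m : 'X_{1..N}) : col_mnm (mcol m) = m.
Proof. by apply/mnmP => j; rewrite mnmE mxE absz_nat. Qed.

Lemma col_mnmK N (z : 'cV[int]_N) : (forall j, 0 <= z j ord0) -> mcol (col_mnm z) = z.
Proof. by move=> z_ge0; apply/matrixP => j k; rewrite (ord1 k) !mxE mnmE gez0_abs. Qed.

Lemma mcolD N (u v : 'X_{1..N}) : mcol (u + v)%MM = mcol u + mcol v.
Proof. by apply/matrixP => j k; rewrite !mxE mnmDE PoszD. Qed.

Section ToricIdeal.
Variables (K : fieldType) (n N : nat) (A : 'M[int]_(n, N)).
Implicit Types (p q : {mpoly K[N]}) (u v m : 'X_{1..N}).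

Lemma tdegD u v : tdeg A (u + v)%MM = tdeg A u + tdeg A v.
Proof. by rewrite /tdeg mcolD mulmxDr. Qed.

Lemma tdeg_eq_ker u v : tdeg A u = tdeg A v <-> A *m (mcol u - mcol v) = 0.
Proof.
by rewrite /tdeg mulmxBr; split => [-> | /eqP]; rewrite ?subrr // subr_eq0 => /eqP.
Qed.

Lemma toric_coef_isolated p m :
  (forall m', tdeg A m' = tdeg A m -> m' = m) -> in_toric A p -> p@_m = 0.
Proof.
move=> isolated /(_ (tdeg A m)); rewrite /toric_img_coef.
rewrite (eq_bigl (pred1 m)) => [|m'/=]; last by apply/eqP/eqP => [/isolated | ->].
have [m_p | m_p] := boolP (m \in msupp p); last by move/memN_msupp_eq0: m_p.
by rewrite -big_filter filter_pred1_uniq ?msupp_uniq // big_seq1.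
Qed.

(* Pairing each [m] of the support with a fixed representative [rep_of (tdeg A m)]
   of its fibre, the terms [p@_m *: 'X_[rep_of _]] cancel fibre by fibre. *)
Lemma in_toric_binomial_ind (Q : {mpoly K[N]} -> Prop) : ideal_pred Q ->
  (forall u v, tdeg A u = tdeg A v -> Q ('X_[u] - 'X_[v])) ->
  forall p, in_toric A p -> Q p.
Proof.
move=> idQ Qbin p Ip; set s := msupp p.
pose rep_of b := head 0%MM [seq m <- s | tdeg A m == b].
have tdeg_rep m : m \in s -> tdeg A (rep_of (tdeg A m)) = tdeg A m.
  move=> ms; rewrite /rep_of; have : m \in [seq m' <- s | tdeg A m' == tdeg A m].
    by rewrite mem_filter eqxx.
  by case: [seq _ <- _ | _] (filter_all (fun m' => tdeg A m' == tdeg A m) s)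
    => //= m' l /andP [/eqP].
have reps0 : \sum_(m <- s) p@_m *: 'X_[rep_of (tdeg A m)] = 0.
  rewrite (big_fibers _ (tdeg A)) big1_seq // => b _.
  rewrite (eq_bigr (fun m => p@_m *: 'X_[rep_of b])) => [|m /eqP -> //].
  by rewrite -scaler_suml (Ip b : \sum_(m <- s | tdeg A m == b) p@_m = 0) scale0r.
have -> : p = \sum_(m <- s) p@_m *: ('X_[m] - 'X_[rep_of (tdeg A m)]).
  by rewrite (eq_bigr _ (fun m _ => scalerBr _ _ _)) sumrB reps0 subr0 -mpolyE.
apply: ideal_pred_sum => // m ms; rewrite -mul_mpolyC; apply: ideal_predMl => //.
by apply: Qbin; rewrite tdeg_rep.
Qed.

Section NonnegativeConfiguration.
Hypothesis A_ge0 : forall i j, 0 <= A i j.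

Lemma tdeg_ge0 m i : 0 <= tdeg A m i ord0.
Proof. by rewrite mxE sumr_ge0 // => j _; rewrite mxE mulr_ge0. Qed.

Definition toric_exp m : 'X_{1..n} := col_mnm (tdeg A m).

Lemma mcol_toric_exp m : mcol (toric_exp m) = tdeg A m.
Proof. by rewrite col_mnmK // => i; apply: tdeg_ge0. Qed.

Lemma toric_exp_eq u v : (toric_exp u == toric_exp v) = (tdeg A u == tdeg A v).
Proof. by rewrite -!mcol_toric_exp (inj_eq (can_inj (@mcolK _))). Qed.

Lemma toric_expD : {morph toric_exp : u v / (u + v)%MM}.
Proof.
by move=> u v; apply: (can_inj (@mcolK _)); rewrite mcolD !mcol_toric_exp tdegD.
Qed.

Lemma toric_exp0 : toric_exp 0%MM = 0%MM.
Proof.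
apply/mnmP => i; rewrite mnmE mnm0E mxE big1 // => j _.
by rewrite !mxE mnm0E mulr0.
Qed.

Lemma toric_expMn m k : toric_exp (m *+ k)%MM = (toric_exp m *+ k)%MM.
Proof. by elim: k => [|k IHk]; rewrite ?toric_exp0 // !mulmS toric_expD IHk. Qed.

Definition toric_map p : {mpoly K[n]} := p \mPo [tuple 'X_[toric_exp U_(j)] | j < N].

Lemma toric_map_X m : toric_map 'X_[m] = 'X_[toric_exp m].
Proof.
rewrite /toric_map comp_mpolyX {2}(multinomUE_id m).
rewrite (big_morph toric_exp toric_expD toric_exp0).
rewrite (big_morph (fun e => 'X_[e] : {mpoly K[n]}) (@mpolyXD _ _) (@mpolyX0 _ _)).
by apply: eq_bigr => j _; rewrite tnth_mktuple mpolyXn toric_expMn.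
Qed.

Lemma toric_map_coef p e : (toric_map p)@_e = toric_img_coef A p (mcol e).
Proof.
rewrite /toric_map comp_mpolyEX raddf_sum /toric_img_coef [RHS]big_mkcond.
apply: eq_bigr => m _.
rewrite /= -/(toric_map 'X_[m]) toric_map_X mcoeffZ mcoeffX.
rewrite -mcol_toric_exp (inj_eq (can_inj (@mcolK _))).
by case: eqP; rewrite ?mulr1 ?mulr0.
Qed.

Lemma in_toricE p : in_toric A p <-> toric_map p = 0.
Proof.
split => [Ip | p0 b]; first by apply/mpolyP => e; rewrite toric_map_coef Ip mcoeff0.
have [b_ge0 | /forallPn [i b_neg]] := boolP [forall i, 0 <= b i ord0].
  by rewrite -(col_mnmK (fun i => forallP b_ge0 i)) -toric_map_coef p0 mcoeff0.
by rewrite /toric_img_coef big1 // => m /eqP tdeg_b; rewrite -tdeg_b tdeg_ge0 in b_neg.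
Qed.

Lemma ideal_pred_in_toric : ideal_pred (@in_toric K n N A).
Proof.
split => [|p q|p q]; rewrite !in_toricE /toric_map.
- exact: raddf0.
- by rewrite raddfD /= => -> ->; rewrite addr0.
- by rewrite rmorphM /= => ->; rewrite mulr0.
Qed.

Lemma in_toric_binomialE u v :
  in_toric A ('X_[u] - 'X_[v] : {mpoly K[N]}) <-> tdeg A u = tdeg A v.
Proof.
rewrite in_toricE /toric_map raddfB /= -!/(toric_map _) !toric_map_X.
split => [|/eqP]; last first.
  by rewrite -toric_exp_eq => /eqP ->; rewrite subrr.
move/(congr1 (mcoeff (toric_exp u))); rewrite mcoeff0 mcoeffB !mcoeffX eqxx.
by case: eqP => [/eqP | _ /eqP]; rewrite ?toric_exp_eq ?subr0 ?oner_eq0 // eq_sym => /eqP.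
Qed.

Lemma in_toric_radical p k : in_toric A (p ^+ k) -> in_toric A p.
Proof.
by rewrite !in_toricE /toric_map rmorphXn => /eqP; rewrite expf_eq0 => /andP [_ /eqP].
Qed.

End NonnegativeConfiguration.
End ToricIdeal.

Lemma in_toric_sub (K : fieldType) n n' N (A : 'M[int]_(n, N)) (A' : 'M[int]_(n', N))
    (p : {mpoly K[N]}) : (forall i j, 0 <= A i j) ->
  (forall u v, tdeg A' u = tdeg A' v -> tdeg A u = tdeg A v) ->
  in_toric A' p -> in_toric A p.
Proof.
move=> A_ge0 fibres.
apply: (in_toric_binomial_ind (A := A') (ideal_pred_in_toric K A_ge0)) => u v.
by move/fibres/(in_toric_binomialE K A_ge0).
Qed.

Lemma tdeg_col_mx n1 n2 N (A : 'M[int]_(n1, N)) (B : 'M[int]_(n2, N)) m :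
  tdeg (col_mx A B) m = col_mx (tdeg A m) (tdeg B m).
Proof. exact: mul_col_mx. Qed.

Lemma in_toric_col_mx (K : fieldType) n1 n2 N
    (A : 'M[int]_(n1, N)) (B : 'M[int]_(n2, N)) (p : {mpoly K[N]}) :
  (forall i j, 0 <= A i j) -> in_toric (col_mx A B) p -> in_toric A p.
Proof.
by move=> A_ge0; apply: in_toric_sub => // u v; rewrite !tdeg_col_mx => /eq_col_mx [].
Qed.

Lemma config_ok_col_mx n1 n2 N (A : 'M[int]_(n1, N)) (B : 'M[int]_(n2, N)) :
  config_ok A -> config_ok (col_mx A B).
Proof.
by move=> okA m; rewrite tdeg_col_mx -col_mx0 => /eq_col_mx [/okA].
Qed.

Lemma col_mx_ge0 n1 n2 N (A : 'M[int]_(n1, N)) (B : 'M[int]_(n2, N)) :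
  (forall i j, 0 <= A i j) -> (forall i j, 0 <= B i j) -> forall i j, 0 <= col_mx A B i j.
Proof.
by move=> A_ge0 B_ge0 i j; case: (split_ordP i) => k ->; rewrite ?col_mxEu ?col_mxEd.
Qed.

(* The [j]-th coordinates of the lattice [ker A] form a subgroup of [Z]; it is
   generated by its least positive element, found by Euclidean descent. *)
Lemma kernel_coord_generator p N (A : 'M[int]_(p, N)) (j : 'I_N) (z : 'cV[int]_N) :
  A *m z = 0 -> z j ord0 != 0 ->
  exists u : 'cV[int]_N, [/\ A *m u = 0, 0 < u j ord0 &
    forall w : 'cV[int]_N, A *m w = 0 -> (u j ord0 %| w j ord0)%Z].
Proof.
move=> Az zj_neq0; wlog zj_gt0 : z Az zj_neq0 / 0 < z j ord0.
  move=> gen; have [zj_gt0 | zj_le0] := ltrP 0 (z j ord0); first exact: (gen z).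
  apply: (gen (- z)); rewrite ?mulmxN ?Az ?oppr0 // mxE ?oppr_eq0 //.
  by rewrite oppr_gt0 lt_neqAle zj_neq0.
have [g le_zg] := ubnP `|z j ord0|%N.
elim: g => // g IHg in z zj_gt0 Az zj_neq0 le_zg *.
have [gen | ] := classic (forall w : 'cV[int]_N, A *m w = 0 -> (z j ord0 %| w j ord0)%Z).
  by exists z.
move=> /not_all_ex_not [w not_dvd_w].
have [Aw zj_ndvd] := imply_to_and _ _ not_dvd_w.
have w'j : (w - (w j ord0 %/ z j ord0)%Z *: z) j ord0 = (w j ord0 %% z j ord0)%Z.
  by rewrite !mxE {1}(divz_eq (w j ord0) (z j ord0)) addrC addKr.
have w'j_neq0 : (w j ord0 %% z j ord0)%Z != 0 by apply/eqP => /dvdz_mod0P.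
apply: (IHg (w - (w j ord0 %/ z j ord0)%Z *: z)); rewrite ?w'j //.
- by rewrite lt0r w'j_neq0 modz_ge0.
- by rewrite mulmxBr -scalemxAr Aw Az scaler0 subr0.
- have := ltz_pmod (w j ord0) zj_gt0; have := modz_ge0 (w j ord0) zj_neq0.
  by move: le_zg; lia.
Qed.

Section MonomialSaturation.
Variables (K : fieldType) (N : nat) (J : {mpoly K[N]} -> Prop) (pi : 'X_{1..N}).
Hypothesis idJ : ideal_pred J.
Implicit Types u v w s : 'X_{1..N}.

Definition sat_rel u v := saturation J 'X_[pi] ('X_[u] - 'X_[v]).

Let idS := ideal_pred_saturation idJ 'X_[pi].

Lemma sat_rel_of u v : J ('X_[u] - 'X_[v]) -> sat_rel u v.
Proof. by exists 0%N; rewrite expr0 mul1r. Qed.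

Lemma sat_rel_refl u : sat_rel u u.
Proof. by rewrite /sat_rel subrr; apply: (ideal_pred0 idS). Qed.

Lemma sat_rel_sym u v : sat_rel u v -> sat_rel v u.
Proof. by move=> uv; rewrite /sat_rel -opprB; apply: (ideal_predN idS). Qed.

Lemma sat_rel_trans v u w : sat_rel u v -> sat_rel v w -> sat_rel u w.
Proof.
by move=> uv vw; rewrite /sat_rel -(subrKA 'X_[v]) addrC; apply: (ideal_predD idS).
Qed.

Lemma sat_rel_addr s u v : sat_rel u v -> sat_rel (u + s) (v + s).
Proof. by move=> uv; rewrite /sat_rel !mpolyXD -mulrBl; apply: (ideal_predMr idS). Qed.

Lemma sat_rel_add u v u' v' : sat_rel u v -> sat_rel u' v' -> sat_rel (u + u') (v + v').
Proof.
move=> uv u'v'; apply: (sat_rel_trans (v := (v + u')%MM)); first exact: sat_rel_addr.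
by rewrite ![(v + _)%MM]addmC; apply: sat_rel_addr.
Qed.

Lemma sat_rel_muln k u v : sat_rel u v -> sat_rel (u *+ k) (v *+ k).
Proof.
move=> uv; elim: k => [|k IHk]; first exact: sat_rel_refl.
by rewrite !mulmS; apply: sat_rel_add.
Qed.

Lemma sat_rel_sum (I : Type) (r : seq I) (P : pred I) (F G : I -> 'X_{1..N}) :
  (forall i, P i -> sat_rel (F i) (G i)) ->
  sat_rel (\sum_(i <- r | P i) F i)%MM (\sum_(i <- r | P i) G i)%MM.
Proof. by apply: big_ind2; [apply: sat_rel_refl | apply: sat_rel_add]. Qed.

Lemma sat_rel_cancel s u v :
  (forall j, pi j = 0%N -> s j = 0%N) -> sat_rel (u + s) (v + s) -> sat_rel u v.
Proof.
move=> s_supp uvs; have le_s : (s <= pi *+ mdeg s)%MM.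
  apply/mnm_lepP => j; rewrite mulmnE; have [/s_supp -> // | pij] := eqVneq (pi j) 0%N.
  apply: (@leq_trans (mdeg s)); last by rewrite leq_pmull ?lt0n.
  by rewrite mdegE (bigD1 j) //= leq_addr.
apply: (saturation_cancel idJ (x := 'X_[s]) (y := 'X_[pi *+ mdeg s - s]) (T := mdeg s)).
  by rewrite -mpolyXD addmC submK // mpolyXn.
by rewrite mulrBr -!mpolyXD ![(s + _)%MM]addmC.
Qed.

End MonomialSaturation.

Lemma principal_ideal_X (K : fieldType) N (pi u : 'X_{1..N}) :
  (pi <= u)%MM -> principal_ideal ('X_[pi] : {mpoly K[N]}) 'X_[u].
Proof. by move=> le_pi_u; exists 'X_[u - pi]; rewrite -mpolyXD addmC submK. Qed.

Lemma sum_indicator (R : pzSemiRingType) (I : finType) (i : I) (F : I -> R) :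
  \sum_j (j == i)%:R * F j = F i.
Proof.
rewrite (eq_bigr (fun j => if j == i then F j else 0)) => [|j _].
  by rewrite -big_mkcond big_pred1_eq.
by case: eqP; rewrite ?mul1r ?mul0r.
Qed.

Section SimplicialConfiguration.
Variables (n r : nat) (d : 'I_n -> nat) (a : 'I_r -> 'I_n -> nat).
Hypotheses (d_gt0 : forall i, (0 < d i)%N) (a_gt0 : forall k i, (0 < a k i)%N).

Local Notation N := (n + r).
Local Notation A := (simplicial_config d a).
Local Notation xv i := (lshift r i).
Local Notation yv k := (rshift n k).
Implicit Types (m u v : 'X_{1..N}) (z w : 'cV[int]_N).

Lemma simplicial_config_x i j : A i (xv j) = if i == j then (d i)%:Z else 0.
Proof. by rewrite /simplicial_config row_mxEl mxE. Qed.

Lemma simplicial_config_y i k : A i (yv k) = (a k i)%:Z.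
Proof. by rewrite /simplicial_config row_mxEr mxE. Qed.

Lemma simplicial_config_ge0 i j : 0 <= A i j.
Proof.
case: (split_ordP j) => l ->; rewrite ?simplicial_config_y //.
by rewrite simplicial_config_x; case: eqP.
Qed.

Lemma mulmx_simplicial z i :
  (A *m z) i ord0 = (d i)%:Z * z (xv i) ord0 + \sum_k (a k i)%:Z * z (yv k) ord0.
Proof.
rewrite mxE big_split_ord /=; congr (_ + _); last first.
  by apply: eq_bigr => k _; rewrite simplicial_config_y.
rewrite (bigD1 i) //= simplicial_config_x eqxx big1 ?addr0 // => j ji.
by rewrite simplicial_config_x eq_sym (negbTE ji) mul0r.
Qed.

Lemma tdeg_simplicial m i :
  tdeg A m i ord0 = (d i * m (xv i) + \sum_k a k i * m (yv k))%N%:Z.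
Proof.
rewrite /tdeg mulmx_simplicial !mxE PoszD PoszM (big_morph Posz PoszD (erefl _)).
by congr (_ + _); apply: eq_bigr => k _; rewrite mxE PoszM.
Qed.

Lemma tdeg_simplicial_eq0 m i :
  tdeg A m i ord0 = 0 -> m (xv i) = 0%N /\ forall k, m (yv k) = 0%N.
Proof.
rewrite tdeg_simplicial => -[/eqP]; rewrite addn_eq0 muln_eq0 sum_nat_eq0.
rewrite (negbTE (lt0n_neq0 (d_gt0 i))) => /andP [/eqP -> /forallP m_y]; split => // k.
by move: (m_y k); rewrite muln_eq0 (negbTE (lt0n_neq0 (a_gt0 k i))) => /eqP.
Qed.

Lemma config_ok_simplicial : (0 < n)%N -> config_ok A.
Proof.
move=> n_gt0 m /matrixP m0.
have row_eq0 i : m (xv i) = 0%N /\ forall k, m (yv k) = 0%N.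
  by apply: tdeg_simplicial_eq0; rewrite m0 mxE.
apply/mnmP => j; rewrite mnm0E; case: (split_ordP j) => [i -> | k ->].
  by case: (row_eq0 i).
by case: (row_eq0 (Ordinal n_gt0)) => _ ->.
Qed.

Lemma simplicial_isolated m i : (forall k, m (yv k) = 0%N) -> m (xv i) = 0%N ->
  forall m', tdeg A m' = tdeg A m -> m' = m.
Proof.
move=> m_y m_xi m' /matrixP eq_m.
have [_ m'_y] : m' (xv i) = 0%N /\ forall k, m' (yv k) = 0%N.
  apply: tdeg_simplicial_eq0; rewrite eq_m tdeg_simplicial m_xi big1 => [|k _].
    by rewrite muln0.
  by rewrite m_y muln0.
apply/mnmP => j; case: (split_ordP j) => [l -> | k ->]; last by rewrite m_y m'_y.
move: (eq_m l ord0); rewrite !tdeg_simplicial !big1 => [[]|k|k];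
  rewrite ?m_y ?m'_y ?muln0 //.
by rewrite !addn0 => /eqP; rewrite eqn_mul2l (negbTE (lt0n_neq0 (d_gt0 l))) => /eqP.
Qed.

Definition prod_d : nat := \prod_i d i.

Lemma prod_d_gt0 : (0 < prod_d)%N.
Proof. by rewrite prodn_gt0. Qed.

Lemma dvdn_prod_d i : (d i %| prod_d)%N.
Proof. by rewrite /prod_d (bigD1 i) //= dvdn_mulr. Qed.

(* [y_k ^ prod_d] and [x ^ xpow k] both map to [t ^ (prod_d * a_k)]. *)
Definition xpow k : 'X_{1..N} :=
  [multinom if split j is inl i then (prod_d %/ d i * a k i)%N else 0%N | j < N].
Definition ypow k : 'X_{1..N} := (U_(yv k) *+ prod_d)%MM.
Definition xones : 'X_{1..N} := [multinom (j < n)%N : nat | j < N].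

Lemma xpow_x k i : xpow k (xv i) = (prod_d %/ d i * a k i)%N.
Proof. by rewrite mnmE (unsplitK (inl _ i)). Qed.
Lemma xpow_y k l : xpow k (yv l) = 0%N.
Proof. by rewrite mnmE (unsplitK (inr _ l)). Qed.
Lemma ypow_x k i : ypow k (xv i) = 0%N.
Proof. by rewrite mulmnE mnm1E eq_rlshift. Qed.
Lemma ypow_y k l : ypow k (yv l) = if k == l then prod_d else 0%N.
Proof. by rewrite mulmnE mnm1E eq_rshift; case: eqP; rewrite ?mul1n. Qed.
Lemma xones_x i : xones (xv i) = 1%N.
Proof. by rewrite mnmE /= ltn_ord. Qed.
Lemma xones_y k : xones (yv k) = 0%N.
Proof. by rewrite mnmE /= ltnNge leq_addr. Qed.

Lemma tdeg_ypow k : tdeg A (ypow k) = tdeg A (xpow k).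
Proof.
apply/matrixP => i j; rewrite (ord1 j) !tdeg_simplicial ypow_x xpow_x muln0.
have sum_x : (\sum_l a l i * xpow k (yv l) = 0)%N.
  by rewrite big1 // => l _; rewrite xpow_y muln0.
have sum_y : (\sum_l a l i * ypow k (yv l) = a k i * prod_d)%N.
  rewrite (bigD1 k) //= ypow_y eqxx big1 ?addn0 // => l.
  by rewrite ypow_y eq_sym => /negbTE ->; rewrite muln0.
by rewrite sum_x sum_y addn0 add0n mulnA [(d i * _)%N]mulnC divnK ?dvdn_prod_d // mulnC.
Qed.

Lemma xones_le_xpow k : (xones <= xpow k)%MM.
Proof.
apply/mnm_lepP => j; case: (split_ordP j) => [i -> | l ->]; rewrite ?xones_y //.
rewrite xones_x xpow_x muln_gt0 a_gt0 andbT divn_gt0 ?d_gt0 //.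
by rewrite dvdn_leq ?prod_d_gt0 ?dvdn_prod_d.
Qed.

Lemma kernel_generator_y (k0 k1 : 'I_r) : k0 != k1 ->
  exists u : 'cV[int]_N, [/\ A *m u = 0, u (yv k1) ord0 != 0 &
    forall w, A *m w = 0 -> (u (yv k0) ord0 %| w (yv k0) ord0)%Z].
Proof.
pose v k := mcol (ypow k) - mcol (xpow k).
have Av k : A *m v k = 0 by apply/tdeg_eq_ker; apply: tdeg_ypow.
have v_y k l : v k (yv l) ord0 = if k == l then prod_d%:Z else 0.
  by rewrite !mxE ypow_y xpow_y subr0; case: eqP.
move=> k01; have [|u0 [Au0 _ u0_gen]] := kernel_coord_generator (j := yv k0) (Av k0).
  by rewrite v_y eqxx; move: prod_d_gt0; lia.
have [u0_k1 | u0_k1] := eqVneq (u0 (yv k1) ord0) 0; last by exists u0.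
exists (u0 + v k1); split.
- by rewrite mulmxDr Au0 Av addr0.
- by rewrite mxE u0_k1 v_y eqxx add0r; move: prod_d_gt0; lia.
- by move=> w /u0_gen; rewrite mxE v_y eq_sym (negbTE k01) addr0.
Qed.

Section Splitting.
Variables (K : fieldType) (i0 : 'I_n) (k0 k1 k2 : 'I_r).
Hypotheses (k01 : k0 != k1) (k02 : k0 != k2) (k12 : k1 != k2).
Variable u : 'cV[int]_N.
Hypotheses (Au : A *m u = 0) (u_k1 : u (yv k1) ord0 != 0)
  (u_gen : forall w, A *m w = 0 -> (u (yv k0) ord0 %| w (yv k0) ord0)%Z).

Local Notation b k := (u (yv k) ord0).
Implicit Types p : {mpoly K[N]}.

Definition row_shift : nat := (`|b k1| + \sum_k `|b k|)%N.

(* Adding [row_shift] times the row [i0] of [A] makes the entries nonnegative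
   and does not change the kernel inside [ker A]. *)
Definition B1 : 'M[int]_(r, N) := \matrix_(k, l)
  ((k != k0)%:R * (b k1 * (l == yv k)%:R - b k * (l == yv k1)%:R)
   + row_shift%:Z * A i0 l).
Definition E2 : 'M[int]_(1, N) := \row_l (l == yv k0)%:R.
Definition A1 := col_mx A B1.
Definition A2 := col_mx A E2.

Lemma B1_ge0 k l : 0 <= B1 k l.
Proof.
rewrite mxE; case: (split_ordP l) => [i -> | l' ->].
  by rewrite !eq_lrshift /= !mulr0 add0r mulr_ge0 ?simplicial_config_ge0.
have le_shift : (`|b k1| + `|b k|)%N%:Z <= row_shift%:Z.
  by rewrite lez_nat leq_add2l (bigD1 k) //= leq_addr.
have a_ge1 : 1 <= (a l' i0)%:Z by rewrite lez_nat a_gt0.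
rewrite !eq_rshift simplicial_config_y.
move: le_shift a_ge1; rewrite PoszD !abszE.
case: (k != k0); case: (l' == k); case: (l' == k1) => /=; nia.
Qed.

Lemma A1_ge0 i l : 0 <= A1 i l.
Proof. exact: col_mx_ge0 simplicial_config_ge0 B1_ge0 i l. Qed.

Lemma A2_ge0 i l : 0 <= A2 i l.
Proof. by apply: col_mx_ge0 simplicial_config_ge0 _ i l => i' l'; rewrite mxE. Qed.

Lemma mulmx_B1 z k : (B1 *m z) k ord0 =
  (k != k0)%:R * (b k1 * z (yv k) ord0 - b k * z (yv k1) ord0)
  + row_shift%:Z * (A *m z) i0 ord0.
Proof.
rewrite mxE [in RHS]mxE -(sum_indicator (yv k) (fun l => z l ord0)).
rewrite -(sum_indicator (yv k1) (fun l => z l ord0)) !mulr_sumr -sumrB mulr_sumr.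
by rewrite -big_split; apply: eq_bigr => l _; rewrite mxE /=; ring.
Qed.

Lemma kerA1P z : A1 *m z = 0 <->
  A *m z = 0 /\ forall k, k != k0 -> b k1 * z (yv k) ord0 = b k * z (yv k1) ord0.
Proof.
rewrite /A1 mul_col_mx -col_mx0; split => [/eq_col_mx [Az B1z] | [Az B1z]].
  split=> // k kk0; apply/eqP; rewrite -subr_eq0.
  move/matrixP: B1z => /(_ k ord0).
  by rewrite mulmx_B1 Az !mxE kk0 mul1r mulr0 addr0 => ->.
congr col_mx => //; apply/matrixP => k j; rewrite (ord1 j) mulmx_B1 Az !mxE mulr0 addr0.
by have [-> | /B1z ->] := eqVneq k k0; rewrite ?mul0r // subrr mulr0.
Qed.

Lemma kerA2P z : A2 *m z = 0 <-> A *m z = 0 /\ z (yv k0) ord0 = 0.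
Proof.
have E2z : (E2 *m z) ord0 ord0 = z (yv k0) ord0.
  rewrite mxE -(sum_indicator (yv k0) (fun l => z l ord0)).
  by apply: eq_bigr => l _; rewrite mxE.
rewrite /A2 mul_col_mx -col_mx0; split => [/eq_col_mx [Az E2z0] | [Az zk0]].
  by rewrite -E2z E2z0 mxE.
by congr col_mx => //; apply/matrixP => i j; rewrite !ord1 E2z zk0 mxE.
Qed.

Lemma kernel_split w : A *m w = 0 -> exists w1, A1 *m w1 = 0 /\ A2 *m (w - w1) = 0.
Proof.
move=> Aw; have /dvdzP [t wk0] := u_gen Aw; exists (t *: u); split.
  by apply/kerA1P; rewrite -scalemxAr Au scaler0; split => // k _; rewrite !mxE; ring.
by apply/kerA2P; rewrite mulmxBr -scalemxAr Au Aw scaler0 subr0 !mxE wk0 subrr.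
Qed.

Lemma tdeg_A1_ypow_k0 : tdeg A1 (ypow k0) = tdeg A1 (xpow k0).
Proof.
apply/tdeg_eq_ker/kerA1P; split; first exact/tdeg_eq_ker/tdeg_ypow.
move=> k kk0; rewrite !mxE !ypow_y !xpow_y eq_sym (negbTE kk0) (negbTE k01).
by rewrite !subr0 !mulr0.
Qed.

Lemma tdeg_A2_ypow k : k != k0 -> tdeg A2 (ypow k) = tdeg A2 (xpow k).
Proof.
move=> kk0; apply/tdeg_eq_ker/kerA2P; split; first exact/tdeg_eq_ker/tdeg_ypow.
by rewrite !mxE ypow_y xpow_y (negbTE kk0) subr0.
Qed.

Lemma tdeg_A1_ypow_k2 : tdeg A1 (ypow k2) <> tdeg A1 (xpow k2).
Proof.
move/tdeg_eq_ker/kerA1P => [_ /(_ k2)]; rewrite eq_sym k02 => /(_ isT) /eqP.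
rewrite !mxE !ypow_y !xpow_y eqxx [k2 == k1]eq_sym (negbTE k12) !subr0 mulr0 mulf_eq0.
by rewrite (negbTE u_k1) eqz_nat (negbTE (lt0n_neq0 prod_d_gt0)).
Qed.

Lemma tdeg_A2_ypow_k0 : tdeg A2 (ypow k0) <> tdeg A2 (xpow k0).
Proof.
move/tdeg_eq_ker/kerA2P => [_ /eqP]; rewrite !mxE ypow_y xpow_y eqxx subr0.
by rewrite eqz_nat (negbTE (lt0n_neq0 prod_d_gt0)).
Qed.

Definition I12 : {mpoly K[N]} -> Prop := ideal_add (in_toric A1) (in_toric A2).

Lemma ideal_pred_I12 : ideal_pred I12.
Proof.
rewrite /I12; apply: ideal_pred_add; apply: ideal_pred_in_toric.
  exact: A1_ge0.
exact: A2_ge0.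
Qed.

Lemma I12_of_A1 v v' : tdeg A1 v = tdeg A1 v' -> I12 ('X_[v] - 'X_[v']).
Proof.
move/(in_toric_binomialE K A1_ge0) => I1; exists ('X_[v] - 'X_[v']), 0.
by split; rewrite ?addr0 //; apply: (ideal_pred0 (ideal_pred_in_toric K A2_ge0)).
Qed.

Lemma I12_of_A2 v v' : tdeg A2 v = tdeg A2 v' -> I12 ('X_[v] - 'X_[v']).
Proof.
move/(in_toric_binomialE K A2_ge0) => I2; exists 0, ('X_[v] - 'X_[v']).
by split; rewrite ?add0r //; apply: (ideal_pred0 (ideal_pred_in_toric K A1_ge0)).
Qed.

Lemma I12_binomial k : I12 ('X_[ypow k] - 'X_[xpow k]).
Proof.
have [-> | kk0] := eqVneq k k0; first exact/I12_of_A1/tdeg_A1_ypow_k0.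
exact/I12_of_A2/tdeg_A2_ypow.
Qed.

Local Notation rel := (sat_rel I12 xones).
Let idI12 := ideal_pred_I12.

(* [v + S ~ v + H ~ v + H - w1 ~ v' + H ~ v' + S]: consecutive exponents differ
   by vectors of [ker A1] or [ker A2], and [H >= B] dominates [w1]. The
   x-monomial [S] is then cancelled against a power of [x_1 ... x_n]. *)
Lemma sat_rel_simplicial v v' : tdeg A v = tdeg A v' -> rel v v'.
Proof.
move/tdeg_eq_ker => Avv'; have [w1 [A1w1 A2w2]] := kernel_split Avv'.
set B := (\sum_j `|w1 j ord0|)%N.
set S := ((\sum_k xpow k + xones) *+ B)%MM.
set H := ((\sum_k ypow k + xones) *+ B)%MM.
have SH : rel S H.
  apply: (sat_rel_muln idI12); apply: (sat_rel_addr idI12).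
  apply: (sat_rel_sum idI12) => k _.
  exact/(sat_rel_sym idI12)/sat_rel_of/I12_binomial.
have B_le_H j : (B <= H j)%N.
  rewrite mulmnE leq_pmull // mnmDE mnm_sumE; case: (split_ordP j) => [i -> | l ->].
    by rewrite xones_x addn1.
  by rewrite (bigD1 l) //= ypow_y eqxx -addnA ltn_addr ?prod_d_gt0.
have mcol_mid : mcol (col_mnm (mcol (v + H) - w1)) = mcol (v + H) - w1.
  apply: col_mnmK => j; rewrite !mxE mnmDE subr_ge0.
  have := leq_trans (leq_trans _ (B_le_H j)) (leq_addl (v j) _).
  have w1_le : (`|w1 j ord0| <= B)%N by rewrite /B (bigD1 j) //= leq_addr.
  move=> /(_ _ w1_le); rewrite -lez_nat abszE; apply: le_trans; exact: ler_norm.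
have S_supp j : xones j = 0%N -> S j = 0%N.
  rewrite mulmnE mnmDE mnm_sumE; case: (split_ordP j) => [i -> | l ->].
    by rewrite xones_x.
  by rewrite xones_y big1 // => k _; rewrite xpow_y.
apply: (sat_rel_cancel idI12 S_supp).
apply: (sat_rel_trans idI12 (v := (v + H)%MM)).
  by rewrite ![(v + _)%MM]addmC; apply: (sat_rel_addr idI12).
apply: (sat_rel_trans idI12 (v := col_mnm (mcol (v + H) - w1))).
  by apply/sat_rel_of/I12_of_A1/tdeg_eq_ker; rewrite mcol_mid opprB addrC subrK.
apply: (sat_rel_trans idI12 (v := (v' + H)%MM)).
  apply/sat_rel_of/I12_of_A2/tdeg_eq_ker; rewrite mcol_mid !mcolD.
  suff -> : mcol v + mcol H - w1 - (mcol v' + mcol H) = mcol v - mcol v' - w1 by [].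
  by apply/matrixP => i j; rewrite !mxE; ring.
by apply: (sat_rel_sym idI12); rewrite ![(v' + _)%MM]addmC; apply: (sat_rel_addr idI12).
Qed.

Lemma saturation_in_toric p : in_toric A p -> saturation I12 'X_[xones] p.
Proof.
move=> Ap; apply: (in_toric_binomial_ind (A := A) (ideal_pred_saturation idI12 _) _ Ap).
exact: sat_rel_simplicial.
Qed.

Lemma radical_monomial p m : in_toric A p -> m \in msupp p ->
  radical (ideal_add I12 (principal_ideal 'X_[xones])) 'X_[m].
Proof.
move=> Ap mp.
have [/existsP [k m_yk] | /existsPn m_y0] := boolP [exists k, (0 < m (yv k))%N].
  have le_ym : (ypow k <= m *+ prod_d)%MM.
    apply/mnm_lepP => j; rewrite !mulmnE mnm1E.
    by case: eqP => [<- | _]; rewrite ?mul1n ?leq_pmull.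
  exists prod_d, ('X_[m *+ prod_d - ypow k] * ('X_[ypow k] - 'X_[xpow k])),
    ('X_[m *+ prod_d - ypow k] * 'X_[xpow k]); split.
  - exact: (ideal_predMl idI12 _ (I12_binomial k)).
  - exact/(ideal_predMl (ideal_pred_principal _))/principal_ideal_X/xones_le_xpow.
  - by rewrite -mulrDr subrK -mpolyXD submK // mpolyXn.
have [/forallP m_x | /forallPn [i]] := boolP [forall i, (0 < m (xv i))%N].
  exists 1%N, 0, 'X_[m]; split; rewrite ?expr1 ?add0r //.
    exact: (ideal_pred0 idI12).
  apply: principal_ideal_X; apply/mnm_lepP => j; case: (split_ordP j) => [i -> | l ->].
    by rewrite xones_x.
  by rewrite xones_y.
rewrite -eqn0Ngt => /eqP m_xi; move: mp; rewrite mcoeff_msupp.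
rewrite (toric_coef_isolated _ Ap) ?eqxx //.
by apply: simplicial_isolated m_xi => k; apply/eqP; rewrite -leqn0 leqNgt m_y0.
Qed.

Lemma radical_in_toric p : in_toric A p -> radical I12 p.
Proof.
move=> Ap; apply: (radical_of_saturation idI12 (saturation_in_toric Ap)).
rewrite (mpolyE p); apply: (radical_sum (ideal_pred_add idI12 (ideal_pred_principal _))).
move=> m mp; rewrite -mul_mpolyC.
exact/(radicalMl (ideal_pred_add idI12 (ideal_pred_principal _)))/radical_monomial.
Qed.

Lemma in_toric_ypow k : in_toric A ('X_[ypow k] - 'X_[xpow k] : {mpoly K[N]}).
Proof. exact/(in_toric_binomialE K simplicial_config_ge0)/tdeg_ypow. Qed.

Lemma simplicial_radical_splittable : radical_splittable K A.
Proof.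
have A_ge0 := simplicial_config_ge0.
have ok_A := config_ok_simplicial (leq_ltn_trans (leq0n i0) (ltn_ord i0)).
exists (n + r)%N, (n + 1)%N, A1, A2; split; try exact: config_ok_col_mx.
- move=> p; split => [/radical_in_toric [k [g [h [Ig Ih pk]]]] | [k [g [h [Ig Ih pk]]]]].
    by exists k, g, h.
  apply: (in_toric_radical A_ge0 (k := k)); rewrite pk.
  apply: (ideal_predD (ideal_pred_in_toric K A_ge0)).
  + exact: (in_toric_col_mx A_ge0 Ig).
  + exact: (in_toric_col_mx A_ge0 Ih).
- exists ('X_[ypow k2] - 'X_[xpow k2]) => -[_ /(_ (in_toric_ypow k2))].
  by move/(in_toric_binomialE K A1_ge0); apply: tdeg_A1_ypow_k2.
- exists ('X_[ypow k0] - 'X_[xpow k0]) => -[_ /(_ (in_toric_ypow k0))].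
  by move/(in_toric_binomialE K A2_ge0); apply: tdeg_A2_ypow_k0.
Qed.

End Splitting.
End SimplicialConfiguration.

Theorem proposition2p8 (K : fieldType) (n r : nat) (d : 'I_n -> nat)
  (a : 'I_r -> 'I_n -> nat) :
  (0 < n)%N -> (3 <= r)%N ->
  (forall j, (0 < d j)%N) ->
  (forall i j, (0 < a i j)%N) ->
  radical_splittable K (simplicial_config d a).
Proof.
move=> n_gt0 r_ge3 d_gt0 a_gt0.
pose k0 : 'I_r := Ordinal (leq_trans (isT : 0 < 3)%N r_ge3).
pose k1 : 'I_r := Ordinal (leq_trans (isT : 1 < 3)%N r_ge3).
pose k2 : 'I_r := Ordinal (leq_trans (isT : 2 < 3)%N r_ge3).
have [u [Au u_k1 u_gen]] := kernel_generator_y a d_gt0 (isT : k0 != k1).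
exact: (simplicial_radical_splittable d_gt0 a_gt0 K (Ordinal n_gt0)
          (isT : k0 != k1) (isT : k0 != k2) (isT : k1 != k2) Au u_k1 u_gen).
Qed.
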